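(* In the model of the context (with $\mathbf R_b=\mathbf I_M$, $M\ge2$, $\rho\in[0,1)$ fixed), suppose that $\Pr(Y>0)=1$ and $\Pr(\|\hat{\mathbf h}_b\|^2>0)=1$. Then there exists $\alpha_0\in(0,1)$ such that $\bar R_s^\infty(\alpha_0)>0$.
   Context: Let $M\ge 2$ be an integer; fix $\sigma^2>0$, $\tau_p>0$, $\rho_p>0$, $T_c>\tau_p$, $\eta=1-\tau_p/T_c$. Let $\mathbf R_e\in\mathbb C^{M\times M}$ be Hermitian positive definite, $\mathbf C\in\mathbb C^{M\times M}$ with spectral norm $\|\mathbf C\|\le1$, $\rho\in[0,1)$, and $\beta_b,\beta_e>0$. Let $\mathbf g_b,\mathbf u\sim\mathcal{CN}(\mathbf 0,\mathbf I_M)$ and $\mathbf n_p\sim\mathcal{CN}(\mathbf 0,\sigma^2\mathbf I_M)$ be mutually independent. Define $\mathbf h_b=\sqrt{\beta_b}\,\mathbf g_b$, $\mathbf g_e=\rho\mathbf C\mathbf g_b+\sqrt{1-\rho^2}\,\mathbf u$, $\mathbf h_e=\sqrt{\beta_e}\,\mathbf R_e^{1/2}\mathbf g_e$, $\mathbf y_p=\sqrt{\tau_p\rho_p}\,\mathbf h_b+\mathbf n_p$, the MMSE estimate $\hat{\mathbf h}_b=\sqrt{\tau_p\rho_p}\,\beta_b(\tau_p\rho_p\beta_b+\sigma^2)^{-1}\mathbf y_p$, and $\Omega_{\tilde h}=\dfrac{\beta_b\sigma^2}{\tau_p\rho_p\beta_b+\sigma^2}$ (the per-entry variance of the estimation error).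 Let $\mathbf w=\hat{\mathbf h}_b/\|\hat{\mathbf h}_b\|$ and let $\mathbf V\in\mathbb C^{M\times(M-1)}$ have orthonormal columns spanning the orthogonal complement of $\hat{\mathbf h}_b$. Set $X=\mathbf h_e^H\mathbf w$, $Y=\|\mathbf V^H\mathbf h_e\|^2$. For $\alpha\in(0,1)$ (fraction of power given to data) define $\gamma_b^\infty(\alpha)=\dfrac{\alpha\|\hat{\mathbf h}_b\|^2}{\Omega_{\tilde h}(\alpha+(1-\alpha)(M-1))}$, $\gamma_e^\infty(\alpha)=\dfrac{\alpha|X|^2}{(1-\alpha)Y}$, and the high-SNR ergodic secrecy rate $\bar R_s^\infty(\alpha)=\eta\,\mathbb E\big[(\log_2(1+\gamma_b^\infty(\alpha))-\log_2(1+\gamma_e^\infty(\alpha)))^+\big]$, with $(x)^+=\max\{0,x\}$. *)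

From HB Require Import structures.
From mathcomp Require Import all_boot all_order all_algebra.
From mathcomp Require Import all_classical all_reals all_analysis.
From mathcomp Require Import complex.
Set Implicit Arguments. Unset Strict Implicit. Unset Printing Implicit Defensive.
Import Order.TTheory GRing.Theory Num.Theory.
Local Open Scope ring_scope.
Local Open Scope classical_set_scope.

Section Model.
Variable R : realType.
Local Notation C := (R[i]).

Definition cabs2 (z : C) : R := complex.Re z ^+ 2 + complex.Im z ^+ 2.

Definition cnorm2 n (v : 'cV[C]_n) : R := \sum_(i < n) cabs2 (v i 0).

Definition rC (x : R) : C := complex.Complex x 0.

Definition adj m n (A : 'M[C]_(m, n)) : 'M[C]_(n, m) := (map_mx (@conjc R) A)^T.

Definition hermitian n (A : 'M[C]_n) : Prop := adj A = A.

Definition hpd n (A : 'M[C]_n) : Prop :=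
  hermitian A /\
  forall x : 'cV[C]_n, x != 0 -> 0 < complex.Re ((adj x *m A *m x) 0 0)
                       /\ complex.Im ((adj x *m A *m x) 0 0) = 0.

Definition spec_norm_le1 m n (A : 'M[C]_(m, n)) : Prop :=
  forall x : 'cV[C]_n, cnorm2 (A *m x) <= cnorm2 x.

Definition log2 (x : R) : R := ln x / ln 2.

(* Index of the 6M real coordinates: which vector (0 = g_b, 1 = u, 2 = n_p),
   which entry, and real (true) / imaginary (false) part. *)
Definition coord M {T : Type} (gb u np : T -> 'cV[C]_M)
  (k : 'I_3 * 'I_M * bool) (w : T) : R :=
  let v := if k.1.1 == 0 :> nat then gb w
           else if k.1.1 == 1 :> nat then u w else np w in
  if k.2 then complex.Re (v k.1.2 0) else complex.Im (v k.1.2 0).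

Definition mutually_independent d (T : measurableType d) (P : probability T R)
  (I : finType) (X : I -> T -> R) : Prop :=
  forall B : I -> set R, (forall i, measurable (B i)) ->
    P (\bigcap_(i in [set: I]) (X i @^-1` B i)) =
    \big[*%E/1%E]_(i : I) P (X i @^-1` B i).

(* g_b, u ~ CN(0, I_M), n_p ~ CN(0, sigma2 I_M), mutually independent:
   i.e. all 6M real coordinates are mutually independent real Gaussians,
   centred, with variance 1/2 (for g_b, u) and sigma2/2 (for n_p).
   normal_prob m s has mean m and standard deviation s. *)
Definition gaussian_model d (T : measurableType d) (P : probability T R) M
  (sigma2 : R) (gb u np : T -> 'cV[C]_M) : Prop :=
  (forall k, measurable_fun [set: T] (coord gb u np k)) /\
  mutually_independent P (coord gb u np) /\
  (forall k (B : set R), measurable B ->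
     P (coord gb u np k @^-1` B) =
     normal_prob 0 (Num.sqrt ((if k.1.1 == 2 :> nat then sigma2 else 1) / 2)) B).

Definition h_b M (betab : R) (gb : 'cV[C]_M) : 'cV[C]_M := rC (Num.sqrt betab) *: gb.

Definition g_e M (rho : R) (Cm : 'M[C]_M) (gb u : 'cV[C]_M) : 'cV[C]_M :=
  rC rho *: (Cm *m gb) + rC (Num.sqrt (1 - rho ^+ 2)) *: u.

Definition h_e M (betae : R) (Reh : 'M[C]_M) (ge : 'cV[C]_M) : 'cV[C]_M :=
  rC (Num.sqrt betae) *: (Reh *m ge).

Definition y_p M (taup rhop : R) (hb np : 'cV[C]_M) : 'cV[C]_M :=
  rC (Num.sqrt (taup * rhop)) *: hb + np.

Definition hhat_b M (taup rhop betab sigma2 : R) (yp : 'cV[C]_M) : 'cV[C]_M :=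
  rC (Num.sqrt (taup * rhop) * betab / (taup * rhop * betab + sigma2)) *: yp.

Definition Omega_ht (taup rhop betab sigma2 : R) : R :=
  betab * sigma2 / (taup * rhop * betab + sigma2).

Definition wvec M (hh : 'cV[C]_M) : 'cV[C]_M := rC (Num.sqrt (cnorm2 hh))^-1 *: hh.

Definition gamma_b_inf M (Om alpha : R) (hh : 'cV[C]_M) : R :=
  alpha * cnorm2 hh / (Om * (alpha + (1 - alpha) * (M%:R - 1))).

Definition gamma_e_inf (alpha X Y : R) : R :=
  alpha * X / ((1 - alpha) * Y).

End Model.

From Pilot Require Import Defs.
From HB Require Import structures.
From mathcomp Require Import all_boot all_order all_algebra.
From mathcomp Require Import all_classical all_reals all_analysis.
From mathcomp Require Import complex.
From mathcomp Require Import lra ring.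
Set Implicit Arguments.
Unset Strict Implicit.
Unset Printing Implicit Defensive.
Import Order.TTheory GRing.Theory Num.Theory.
Import numFieldTopology.Exports.
Local Open Scope ring_scope.
Local Open Scope classical_set_scope.

(* Take alpha = 1/2.  Because M >= 2 there is a realisation (g_b, u, n_p) =
   (e_1, u_0, 0) of the channels at which Bob's estimate hhat_b is nonzero and
   Eve's channel h_e is nonzero and orthogonal to it; there X = 0 and
   Y = ||h_e||^2 > 0, so gamma_e = 0 < gamma_b.  The integrand depends
   continuously on the 6M real Gaussian coordinates, hence stays above a
   positive constant on a small box around that point, and this box has
   positive probability since the coordinates are independent Gaussians. *)

(* No measurability of [f] is needed: [c] times the indicator of [B] is a
   simple function below [f] on [D]. *)
Lemma ge0_integral_ge_measure (R : realType) d (T : measurableType d)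
    (mu : {measure set T -> \bar R}) (D B : set T) (f : T -> \bar R) (c : R) :
  measurable D -> measurable B -> B `<=` D -> 0 <= c ->
  (forall x, D x -> (0 <= f x)%E) -> (forall x, B x -> (c%:E <= f x)%E) ->
  (c%:E * mu B <= \int[mu]_(x in D) f x)%E.
Proof.
move=> mD mB BD c0 f0 fB.
rewrite integral_mkcond ge0_integralTE; last first.
  by move=> x; rewrite /patch; case: ifP => // /[!inE] /f0.
apply: ereal_sup_ubound => /=.
exists (scale_nnsfun (indic_nnsfun R mB) c0).
  move=> x /=; rewrite /patch /= /measurable_realfun.mindic indicE.
  have [xB|xB] := boolP (x \in B).
    by rewrite mulr1 ifT ?inE; [exact: fB (set_mem xB)|exact: BD (set_mem xB)].
  by rewrite mulr0; case: ifP => // /[!inE] /f0.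
have := sintegralrM mu c (indic_nnsfun R mB).
by rewrite [sintegral _ (HBNNSimple.NonNegSimpleFun.sort _)]sintegral_indic.
Qed.

Lemma normal_prob_itv_gt0 (R : realType) (m s a b : R) : 0 < s -> a < b ->
  (0 < normal_prob m s `]a, b[%classic)%E.
Proof.
move=> s0 ab.
pose c := normal_peak s * expR (- ((a - m) ^+ 2 + (b - m) ^+ 2) / (s ^+ 2 *+ 2)).
have c0 : 0 < c by rewrite mulr_gt0 ?expR_gt0 ?normal_peak_gt0 ?gt_eqF.
apply: (@lt_le_trans _ _ (c%:E * lebesgue_measure `]a, b[%classic)%E).
  by rewrite lebesgue_measure_itv /= lte_fin ab -EFinM lte_fin mulr_gt0 ?subr_gt0.
apply: ge0_integral_ge_measure => //; first exact: ltW.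
  by move=> x _; rewrite lee_fin normal_pdf_ge0.
move=> x /=; rewrite in_itv /= => /andP [ax xb].
rewrite lee_fin normal_pdfE ?gt_eqF //= /normal_fun.
apply: ler_wpM2l; first exact: normal_peak_ge0.
rewrite ler_expR !mulNr lerN2 ler_wpM2r ?invr_ge0 ?mulrn_wge0 ?sqr_ge0 //.
move: ax xb; move: (x : R) => y ay yb.
have := sqr_ge0 (a - m); have := sqr_ge0 (b - m).
have [ym|ym] := leP m y.
  have : 0 <= (b - y) * (b + y - 2 * m) by rewrite mulr_ge0 //; lra.
  nra.
have : 0 <= (y - a) * (2 * m - a - y) by rewrite mulr_ge0 //; lra.
nra.
Qed.

Lemma mutually_independent_bigcap_gt0 (R : realType) d (T : measurableType d)
    (P : probability T R) (I : finType) (X : I -> T -> R) (B : I -> set R) :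
  mutually_independent P X -> (forall i, measurable (B i)) ->
  (forall i, 0 < P (X i @^-1` B i))%E ->
  (0 < P (\bigcap_(i in [set: I]) X i @^-1` B i))%E.
Proof.
move=> indX mB PB; rewrite indX //.
by apply: (big_ind (fun x : \bar R => 0 < x)%E) => //; exact: mule_gt0.
Qed.

Section ComplexMatrix.
Variable R : realType.
Local Notation C := R[i].

Lemma ReD (a b : C) : complex.Re (a + b) = complex.Re a + complex.Re b.
Proof. by case: a; case: b. Qed.

Lemma ImD (a b : C) : complex.Im (a + b) = complex.Im a + complex.Im b.
Proof. by case: a; case: b. Qed.

Lemma ReN (a : C) : complex.Re (- a) = - complex.Re a.
Proof. by case: a. Qed.

Lemma ReM (a b : C) :
  complex.Re (a * b) = complex.Re a * complex.Re b - complex.Im a * complex.Im b.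
Proof. by case: a; case: b. Qed.

Lemma ImM (a b : C) :
  complex.Im (a * b) = complex.Re a * complex.Im b + complex.Im a * complex.Re b.
Proof. by case: a; case: b. Qed.

Lemma ReJ (a : C) : complex.Re a^*%C = complex.Re a.
Proof. by case: a. Qed.

Lemma ImJ (a : C) : complex.Im a^*%C = - complex.Im a.
Proof. by case: a. Qed.

Lemma rCM (a b : R) : rC a * rC b = rC (a * b).
Proof. by apply/eqP; rewrite eq_complex /= !mulr0 mul0r subr0 addr0 !eqxx. Qed.

Lemma rC1 : rC 1 = 1 :> C.
Proof. by []. Qed.

Lemma conj_rC (a : R) : (rC a)^*%C = rC a.
Proof. by rewrite /rC /= oppr0. Qed.

Lemma cabs2_ge0 (z : C) : 0 <= cabs2 z.
Proof. by rewrite addr_ge0 ?sqr_ge0. Qed.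

Lemma cabs2_eq0 (z : C) : (cabs2 z == 0) = (z == 0).
Proof.
case: z => a b; rewrite /cabs2 paddr_eq0 ?sqr_ge0 // !sqrf_eq0.
by rewrite eq_complex.
Qed.

Lemma cabs2E (z : C) : cabs2 z = complex.Re (z^*%C * z).
Proof. by case: z => a b; rewrite /cabs2 /=; ring. Qed.

Lemma cabs2_rCM (a : R) (z : C) : cabs2 (rC a * z) = a ^+ 2 * cabs2 z.
Proof. by case: z => x y; rewrite /cabs2 /rC /=; ring. Qed.

Lemma adjK m n (A : 'M[C]_(m, n)) : adj (adj A) = A.
Proof. by apply/matrixP => i j; rewrite /adj !mxE conjcK. Qed.

Lemma adjM m n p (A : 'M[C]_(m, n)) (B : 'M[C]_(n, p)) :
  adj (A *m B) = adj B *m adj A.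
Proof. by rewrite /adj map_mxM trmx_mul. Qed.

Lemma adjZ m n (c : C) (A : 'M[C]_(m, n)) : adj (c *: A) = c^*%C *: adj A.
Proof. by apply/matrixP => i j; rewrite /adj !mxE rmorphM. Qed.

Lemma adjB m n (A B : 'M[C]_(m, n)) : adj (A - B) = adj A - adj B.
Proof. by apply/matrixP => i j; rewrite /adj !mxE rmorphB. Qed.

Lemma adj_delta n (i : 'I_n) : adj (delta_mx i 0 : 'cV[C]_n) = delta_mx 0 i.
Proof. by apply/matrixP => a b; rewrite /adj !mxE conjc_nat !ord1 andbC. Qed.

Lemma cnorm2_ge0 n (v : 'cV[C]_n) : 0 <= cnorm2 v.
Proof. by rewrite sumr_ge0 // => i _; exact: cabs2_ge0. Qed.

Lemma cnorm2_gt0 n (v : 'cV[C]_n) : (0 < cnorm2 v) = (v != 0).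
Proof.
rewrite lt_def cnorm2_ge0 andbT; congr negb; apply/eqP/eqP => [/psumr_eq0P v0|->].
  apply/matrixP => i j; rewrite !ord1 mxE; apply/eqP; rewrite -cabs2_eq0.
  by apply/eqP/v0 => // k _; exact: cabs2_ge0.
by rewrite /cnorm2 big1 // => i _; rewrite mxE; apply/eqP; rewrite cabs2_eq0.
Qed.

Lemma adj_mul_self n (v : 'cV[C]_n) : adj v *m v = (rC (cnorm2 v))%:M.
Proof.
apply/matrixP => i j; rewrite !ord1 !mxE eqxx mulr1n /rC /cnorm2.
apply/eqP; rewrite eq_complex /=; apply/andP; split; apply/eqP.
  rewrite (big_morph _ ReD (erefl (0 : R) : complex.Re 0 = 0)).
  by apply: eq_bigr => k _; rewrite !mxE cabs2E.
rewrite (big_morph _ ImD (erefl (0 : R) : complex.Im 0 = 0)) big1 // => k _.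
by rewrite !mxE; case: (v k 0) => a b /=; ring.
Qed.

Lemma cnorm2_Re n (v : 'cV[C]_n) : cnorm2 v = complex.Re ((adj v *m v) 0 0).
Proof. by rewrite adj_mul_self mxE eqxx mulr1n. Qed.

Lemma cabs2_adj_wvec n (e h : 'cV[C]_n) :
  cabs2 ((adj e *m wvec h) 0 0) = cabs2 ((adj e *m h) 0 0) / cnorm2 h.
Proof.
by rewrite /wvec -scalemxAr mxE cabs2_rCM exprVn sqr_sqrtr ?cnorm2_ge0 // mulrC.
Qed.

Lemma adj_wvec_mul_self n (h : 'cV[C]_n) : h != 0 -> adj (wvec h) *m wvec h = 1%:M.
Proof.
rewrite -cnorm2_gt0 => h0.
rewrite /wvec adjZ conj_rC -scalemxAl -scalemxAr scalerA rCM adj_mul_self.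
rewrite -mul_scalar_mx -scalar_mxM rCM -expr2 exprVn sqr_sqrtr ?ltW //.
by rewrite mulVf ?gt_eqF.
Qed.

(* [wvec h] and the columns of [V] form an orthonormal basis, so
   [V V^H = I - w w^H]. *)
Lemma cnorm2_proj_complement k (V : 'M[C]_(k.+1, k)) (h e : 'cV[C]_k.+1) :
  h != 0 -> adj V *m V = 1%:M -> adj V *m h = 0 ->
  cnorm2 (adj V *m e) = cnorm2 e - cabs2 ((adj e *m wvec h) 0 0).
Proof.
move=> h0 VV Vh; set w := wvec h.
have ww : adj w *m w = 1%:M by exact: adj_wvec_mul_self.
have Vw : adj V *m w = 0 by rewrite /w /wvec -scalemxAr Vh scaler0.
have wV : adj w *m V = 0 by rewrite -[V]adjK -adjM Vw /adj map_mx0 trmx0.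
have adj_row : adj (row_mx w V) = col_mx (adj w) (adj V).
  by rewrite /adj map_row_mx tr_row_mx.
have UU : adj (row_mx w V) *m row_mx w V = 1%:M.
  rewrite adj_row mul_col_row ww wV Vw VV; exact: (esym (scalar_mx_block 1 k 1)).
have VVa : V *m adj V = 1%:M - w *m adj w.
  by have := mulmx1C UU; rewrite adj_row mul_row_col => <-; rewrite addrC addKr.
rewrite !cnorm2_Re adjM adjK mulmxA -(mulmxA (adj e)) VVa mulmxBr mulmx1 mulmxBl.
have entryB (A B : 'M[C]_1) : (A - B) 0 0 = A 0 0 - B 0 0 by rewrite !mxE.
rewrite entryB ReD ReN; congr (_ - _); rewrite !mulmxA -(mulmxA _ _ e).
rewrite -[adj w *m e]adjK adjM adjK mxE big_ord1 cabs2E mulrC.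
by rewrite /adj !mxE.
Qed.

Lemma hpd_mul_neq0 n (A : 'M[C]_n) (x : 'cV[C]_n) : hpd A -> x != 0 -> A *m x != 0.
Proof.
move=> [_ posA] /posA [pos _]; apply: contraTneq pos => Ax0.
by rewrite -mulmxA Ax0 mulmx0 mxE ltxx.
Qed.

Lemma exists_orthogonal n (r : 'cV[C]_n.+2) :
  exists2 x : 'cV[C]_n.+2, x != 0 & adj x *m r = 0.
Proof.
have [r0|r0] := eqVneq (r 0 0) 0.
  exists (delta_mx 0 0).
    by apply/negP => /eqP/matrixP/(_ 0 0); rewrite !mxE eqxx; exact/eqP/oner_neq0.
  by apply/matrixP => i j; rewrite !ord1 adj_delta -rowE !mxE.
exists ((r 1 0)^*%C *: delta_mx 0 0 - (r 0 0)^*%C *: delta_mx 1 0).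
  apply/negP => /eqP/matrixP/(_ 1 0); rewrite !mxE /= mulr0 mulr1 sub0r.
  by apply/eqP; rewrite oppr_eq0 conjc_eq0.
apply/matrixP => i j; rewrite !ord1 adjB !adjZ !conjcK !adj_delta mulmxBl.
by rewrite -!scalemxAl -!rowE !mxE mulrC subrr.
Qed.
End ComplexMatrix.

Section ComplexConvergence.
Context {R : realType} {T : Type} {F : set_system T} {FF : Filter F}.
Local Notation C := R[i].

(* [R[i]] has no canonical topology here, so complex limits are taken
   componentwise. *)
Definition ccvg (f : T -> C) (z : C) : Prop :=
  (fun w => complex.Re (f w)) @ F --> complex.Re z /\
  (fun w => complex.Im (f w)) @ F --> complex.Im z.

Lemma ccvg_cst (z : C) : ccvg (fun=> z) z.
Proof. by split; exact: cvg_cst. Qed.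

Lemma ccvgD f g (a b : C) : ccvg f a -> ccvg g b ->
  ccvg (fun w => f w + g w) (a + b).
Proof.
move=> [fRe fIm] [gRe gIm]; split.
  by rewrite ReD; under eq_cvg do rewrite ReD; exact: cvgD.
by rewrite ImD; under eq_cvg do rewrite ImD; exact: cvgD.
Qed.

Lemma ccvgM f g (a b : C) : ccvg f a -> ccvg g b ->
  ccvg (fun w => f w * g w) (a * b).
Proof.
move=> [fRe fIm] [gRe gIm]; split.
  by rewrite ReM; under eq_cvg do rewrite ReM; apply: cvgB; apply: cvgM.
by rewrite ImM; under eq_cvg do rewrite ImM; apply: cvgD; apply: cvgM.
Qed.

Lemma ccvgJ f (a : C) : ccvg f a -> ccvg (fun w => (f w)^*%C) a^*%C.
Proof.
move=> [fRe fIm]; split; first by rewrite ReJ; under eq_cvg do rewrite ReJ.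
by rewrite ImJ; under eq_cvg do rewrite ImJ; exact: cvgN.
Qed.

Lemma ccvg_sum (I : Type) (r : seq I) (f : I -> T -> C) (a : I -> C) :
  (forall i, ccvg (f i) (a i)) ->
  ccvg (fun w => \sum_(i <- r) f i w) (\sum_(i <- r) a i).
Proof.
move=> fa; elim: r => [|i r IHr].
  by rewrite big_nil; under eq_fun do rewrite big_nil; exact: ccvg_cst.
by rewrite big_cons; under eq_fun do rewrite big_cons; exact: ccvgD.
Qed.

Lemma cvg_cabs2 f (a : C) : ccvg f a -> (fun w => cabs2 (f w)) @ F --> cabs2 a.
Proof. by move=> [fRe fIm]; apply: cvgD; apply: cvgM. Qed.

Definition mxcvg {m n} (A : T -> 'M[C]_(m, n)) (A0 : 'M[C]_(m, n)) : Prop :=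
  forall i j, ccvg (fun w => A w i j) (A0 i j).

Lemma mxcvg_cst m n (A : 'M[C]_(m, n)) : mxcvg (fun=> A) A.
Proof. by move=> i j; exact: ccvg_cst. Qed.

Lemma mxcvgD m n (A B : T -> 'M[C]_(m, n)) A0 B0 : mxcvg A A0 -> mxcvg B B0 ->
  mxcvg (fun w => A w + B w) (A0 + B0).
Proof.
move=> AA0 BB0 i j; rewrite mxE; under eq_fun do rewrite mxE.
exact: ccvgD.
Qed.

Lemma mxcvgZ m n (c : C) (A : T -> 'M[C]_(m, n)) A0 : mxcvg A A0 ->
  mxcvg (fun w => c *: A w) (c *: A0).
Proof.
move=> AA0 i j; rewrite mxE; under eq_fun do rewrite mxE.
exact: ccvgM (ccvg_cst c) (AA0 i j).
Qed.

Lemma mxcvgM m n p (A : T -> 'M[C]_(m, n)) (B : T -> 'M[C]_(n, p)) A0 B0 :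
  mxcvg A A0 -> mxcvg B B0 -> mxcvg (fun w => A w *m B w) (A0 *m B0).
Proof.
move=> AA0 BB0 i j; rewrite mxE; under eq_fun do rewrite mxE.
by apply: ccvg_sum => k; exact: ccvgM.
Qed.

Lemma mxcvg_adj m n (A : T -> 'M[C]_(m, n)) A0 : mxcvg A A0 ->
  mxcvg (fun w => adj (A w)) (adj A0).
Proof.
move=> AA0 i j; rewrite /adj !mxE; under eq_fun do rewrite !mxE.
exact: ccvgJ.
Qed.

Lemma cvg_cnorm2 n (v : T -> 'cV[C]_n) v0 : mxcvg v v0 ->
  (fun w => cnorm2 (v w)) @ F --> cnorm2 v0.
Proof.
move=> vv0; rewrite /cnorm2; under eq_fun do rewrite /cnorm2.
apply: (@cvg_big _ _ +%R 0 xpredT add_continuous) => i _.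
exact: cvg_cabs2.
Qed.

End ComplexConvergence.
Arguments ccvg {R T} F f z.
Arguments mxcvg {R T} F {m n} A A0.

Section BoxNeighbourhood.
Variables (R : realType) (T J : Type) (x : J -> T -> R) (x0 : J -> R).

Definition box (dl : R) : set T := [set w | forall k, `|x0 k - x k w| < dl].

Definition box_nbhs : set_system T := filter_from [set dl | 0 < dl] box.

Global Instance box_nbhs_filter : Filter box_nbhs.
Proof.
apply: filter_from_filter; first by exists 1; exact: ltr01.
move=> d1 d2 d1_gt0 d2_gt0; exists (Num.min d1 d2); first by rewrite /= lt_min d1_gt0.
by move=> w boxw; split=> k; have := boxw k; rewrite lt_min => /andP[].
Qed.

Lemma cvg_box_nbhs k : x k @ box_nbhs --> x0 k.
Proof. by apply/cvgrPdist_lt => e e_gt0; exists e. Qed.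

Lemma box_bigcap dl :
  box dl = \bigcap_(k in [set: J]) x k @^-1` `]x0 k - dl, x0 k + dl[%classic.
Proof.
apply/seteqP; split=> w /= boxw k; first by move=> _; rewrite /= in_itv /= -ltr_distlC.
by have := boxw k I; rewrite /= in_itv /= -ltr_distlC.
Qed.

End BoxNeighbourhood.

Lemma cvg_log2 (R : realType) (T : Type) (F : set_system T) {FF : Filter F}
    (f : T -> R) (a : R) :
  0 < a -> f @ F --> a -> (fun w => log2 (f w)) @ F --> log2 a.
Proof.
move=> a_gt0 fa; apply: cvgM; last exact: cvg_cst.
exact: (continuous_cvg _ (continuous_ln a_gt0) fa).
Qed.

Section SecrecyRateIntegrand.
Variables (R : realType) (T : Type) (F : set_system T).
Context {FF : Filter F}.
Variables (k : nat) (Om alpha : R).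
Variables (hh he : T -> 'cV[R[i]]_k.+1) (V : T -> 'M[R[i]]_(k.+1, k)).
Variables (hh0 he0 : 'cV[R[i]]_k.+1).
Hypothesis hh_cvg : mxcvg F hh hh0.
Hypothesis he_cvg : mxcvg F he he0.
Hypothesis hh0_neq0 : hh0 != 0.
Hypothesis he0_neq0 : he0 != 0.
Hypothesis he0_orth : adj he0 *m hh0 = 0.
Hypothesis V_orthocomplement :
  forall w, adj (V w) *m V w = 1%:M /\ adj (V w) *m hh w = 0.

Local Notation X2 w := (cabs2 ((adj (he w) *m wvec (hh w)) 0 0)).
Local Notation Y w := (cnorm2 (adj (V w) *m he w)).

Let cnorm2_hh0_gt0 : 0 < cnorm2 hh0. Proof. by rewrite cnorm2_gt0. Qed.

Lemma cvg_cabs2_adj_wvec : X2 w @[w --> F] --> 0.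
Proof.
under eq_cvg do rewrite cabs2_adj_wvec.
have X2_cvg : (fun w => cabs2 ((adj (he w) *m hh w) 0 0) / cnorm2 (hh w)) @ F -->
    cabs2 ((adj he0 *m hh0) 0 0) / cnorm2 hh0.
  apply: cvgM; first by apply: cvg_cabs2; apply: mxcvgM => //; exact: mxcvg_adj.
  by apply: cvgV; [rewrite gt_eqF|exact: cvg_cnorm2].
have Z0 : cabs2 ((adj he0 *m hh0) 0 0) = 0.
  by apply/eqP; rewrite cabs2_eq0 he0_orth mxE.
by rewrite Z0 mul0r in X2_cvg.
Qed.

Lemma cvg_cnorm2_proj_complement : Y w @[w --> F] --> cnorm2 he0.
Proof.
have near_hh_neq0 : \forall w \near F, hh w != 0.
  apply: filterS _ (cvgr_gt _ (cvg_cnorm2 hh_cvg) _ cnorm2_hh0_gt0) => w.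
  by rewrite cnorm2_gt0.
have near_Y : \forall w \near F, cnorm2 (he w) - X2 w = Y w.
  apply: filterS near_hh_neq0 => w hh_neq0; have [VV Vhh] := V_orthocomplement w.
  by rewrite (cnorm2_proj_complement _ hh_neq0).
apply: cvg_trans (near_eq_cvg near_Y) _; rewrite -[cnorm2 he0]subr0.
by apply: cvgB; [exact: cvg_cnorm2|exact: cvg_cabs2_adj_wvec].
Qed.

Hypothesis Om_gt0 : 0 < Om.
Hypothesis alpha_gt0 : 0 < alpha.
Hypothesis alpha_lt1 : alpha < 1.

Let gamma_b0_gt0 : 0 < gamma_b_inf Om alpha hh0.
Proof.
rewrite /gamma_b_inf divr_gt0 ?mulr_gt0 // ltr_wpDr // mulr_ge0 // subr_ge0 ?ler1n //.
exact: ltW.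
Qed.

Lemma cvg_gamma_b_inf :
  (fun w => gamma_b_inf Om alpha (hh w)) @ F --> gamma_b_inf Om alpha hh0.
Proof.
by apply: cvgM; [apply: cvgM; [exact: cvg_cst|exact: cvg_cnorm2]|exact: cvg_cst].
Qed.

Lemma cvg_gamma_e_inf : (fun w => gamma_e_inf alpha (X2 w) (Y w)) @ F --> 0.
Proof.
have gamma_e_cvg : (fun w => gamma_e_inf alpha (X2 w) (Y w)) @ F -->
    gamma_e_inf alpha 0 (cnorm2 he0).
  apply: cvgM; first by apply: cvgM; [exact: cvg_cst|exact: cvg_cabs2_adj_wvec].
  apply: cvgV; first by rewrite mulf_neq0 // ?subr_eq0 ?gt_eqF // cnorm2_gt0.
  by apply: cvgM; [exact: cvg_cst|exact: cvg_cnorm2_proj_complement].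
by rewrite /gamma_e_inf mulr0 mul0r in gamma_e_cvg.
Qed.

Lemma near_secrecy_integrand_gt0 : exists2 c : R, 0 < c &
  \forall w \near F, c <= Num.max 0
    (log2 (1 + gamma_b_inf Om alpha (hh w)) - log2 (1 + gamma_e_inf alpha (X2 w) (Y w))).
Proof.
set l := log2 (1 + gamma_b_inf Om alpha hh0).
have l_gt0 : 0 < l.
  by rewrite /l /log2 divr_gt0 ?ln_gt0 ?ltr1n // ltrDl.
have cvg_diff : (fun w => log2 (1 + gamma_b_inf Om alpha (hh w))
    - log2 (1 + gamma_e_inf alpha (X2 w) (Y w))) @ F --> l - log2 (1 + 0).
  apply: cvgB; apply: cvg_log2.
  - by have := gamma_b0_gt0; lra.
  - by apply: cvgD; [exact: cvg_cst|exact: cvg_gamma_b_inf].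
  - by rewrite addr0.
  - by apply: cvgD; [exact: cvg_cst|exact: cvg_gamma_e_inf].
have half_l_lt : l / 2 < l - log2 (1 + 0) by rewrite addr0 /log2 ln1 mul0r subr0; lra.
exists (l / 2); first by rewrite divr_gt0.
apply: filterS _ (cvgr_gt _ cvg_diff _ half_l_lt) => w /ltW diff_ge.
by rewrite le_max diff_ge orbT.
Qed.

End SecrecyRateIntegrand.

Lemma measurable_box (R : realType) d (T : measurableType d) (J : finType)
    (x : J -> T -> R) (x0 : J -> R) (dl : R) :
  (forall k, measurable_fun setT (x k)) -> measurable (box x x0 dl).
Proof.
move=> mx; rewrite box_bigcap; apply: fin_bigcap_measurable => [|k _].
  exact: finite_finset.
by rewrite -[_ @^-1` _]setTI; exact: mx.
Qed.

Lemma gaussian_model_box_gt0 (R : realType) d (T : measurableType d)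
    (P : probability T R) M sigma2 (gb u np : T -> 'cV[R[i]]_M)
    (x0 : 'I_3 * 'I_M * bool -> R) (dl : R) :
  0 < sigma2 -> gaussian_model P sigma2 gb u np -> 0 < dl ->
  (0 < P (box (Defs.coord gb u np) x0 dl))%E.
Proof.
move=> sigma2_gt0 [_ [indep law]] dl_gt0; rewrite box_bigcap.
apply: mutually_independent_bigcap_gt0 => // k; rewrite law //.
apply: normal_prob_itv_gt0; last by rewrite ltrBlDr -addrA ltrDl addr_gt0.
by rewrite sqrtr_gt0; case: ifP => _; rewrite divr_gt0.
Qed.

Definition coord_at (R : realType) M (g0 u0 n0 : 'cV[R[i]]_M) k : R :=
  Defs.coord (fun _ : unit => g0) (fun _ => u0) (fun _ => n0) k tt.

Lemma mxcvg_box_coord (R : realType) (T : Type) M (gb u np : T -> 'cV[R[i]]_M)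
    (g0 u0 n0 : 'cV[R[i]]_M) :
  let F := box_nbhs (Defs.coord gb u np) (coord_at g0 u0 n0) in
  [/\ mxcvg F gb g0, mxcvg F u u0 & mxcvg F np n0].
Proof.
move=> F; have cvg_entry o i b :
    Defs.coord gb u np (o, i, b) @ F --> coord_at g0 u0 n0 (o, i, b).
  exact: cvg_box_nbhs.
(* a closed ordinal, so that [Defs.coord] reduces on it (unlike [inord 1]) *)
pose o1 : 'I_3 := Ordinal (isT : (1 < 3)%N).
by split=> i j; rewrite !ord1; split;
  [ exact: (cvg_entry ord0 i true) | exact: (cvg_entry ord0 i false)
  | exact: (cvg_entry o1 i true) | exact: (cvg_entry o1 i false)
  | exact: (cvg_entry ord_max i true) | exact: (cvg_entry ord_max i false) ].
Qed.

Section OrthogonalChannels.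
Variables (R : realType) (m : nat) (sigma2 taup rhop rho betab betae : R).
Variables (Reh Cm : 'M[R[i]]_m.+2).
Hypotheses (sigma2_gt0 : 0 < sigma2) (taup_gt0 : 0 < taup) (rhop_gt0 : 0 < rhop).
Hypotheses (rho2_lt1 : rho ^+ 2 < 1) (betab_gt0 : 0 < betab) (betae_gt0 : 0 < betae).
Hypothesis hpd_Reh : hpd Reh.

Local Notation hhat g := (hhat_b taup rhop betab sigma2 (y_p taup rhop (h_b betab g) 0)).

Let hhat_scale (g : 'cV[R[i]]_m.+2) : exists2 c : R, c != 0 & hhat g = rC c *: g.
Proof.
exists (Num.sqrt (taup * rhop) * betab / (taup * rhop * betab + sigma2) *
        (Num.sqrt (taup * rhop) * Num.sqrt betab)).
  have tr_gt0 : 0 < taup * rhop by rewrite mulr_gt0.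
  by rewrite !mulf_neq0 ?invr_eq0 ?gt_eqF ?sqrtr_gt0 // addr_gt0 // mulr_gt0.
by rewrite /hhat_b /y_p /h_b addr0 !scalerA !rCM !mulrA.
Qed.

Let g_e_onto (g x : 'cV[R[i]]_m.+2) : exists u, g_e rho Cm g u = x.
Proof.
have s_gt0 : 0 < Num.sqrt (1 - rho ^+ 2) by rewrite sqrtr_gt0 subr_gt0.
exists (rC (Num.sqrt (1 - rho ^+ 2))^-1 *: (x - rC rho *: (Cm *m g))).
by rewrite /g_e scalerA rCM mulfV ?gt_eqF // rC1 scale1r addrC subrK.
Qed.

Lemma exists_orthogonal_channels : exists g0 u0 : 'cV[R[i]]_m.+2,
  [/\ hhat g0 != 0, h_e betae Reh (g_e rho Cm g0 u0) != 0
    & adj (h_e betae Reh (g_e rho Cm g0 u0)) *m hhat g0 = 0].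
Proof.
pose g0 : 'cV[R[i]]_m.+2 := delta_mx 0 0.
have g0_neq0 : g0 != 0.
  by apply/negP => /eqP/matrixP/(_ 0 0); rewrite !mxE eqxx; exact/eqP/oner_neq0.
have [x x_neq0 x_orth] := exists_orthogonal (Reh *m g0).
have [u0 ge_x] := g_e_onto g0 x; have [c c_neq0 hhat_g0] := hhat_scale g0.
exists g0, u0; rewrite /h_e ge_x hhat_g0; split.
- by rewrite scaler_eq0 negb_or g0_neq0 andbT; apply: contra c_neq0 => /eqP[/eqP].
- rewrite scaler_eq0 negb_or hpd_mul_neq0 // andbT.
  by apply/eqP => -[]; apply/eqP; rewrite gt_eqF ?sqrtr_gt0.
- have adj_Reh : adj Reh = Reh by case: hpd_Reh.
  by rewrite adjZ adjM adj_Reh -scalemxAl -scalemxAr -mulmxA x_orth !scaler0.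
Qed.

End OrthogonalChannels.

Unset Implicit Arguments.

Theorem lemma1 (R : realType) (d : measure_display) (T : measurableType d)
  (P : probability T R) (M : nat) (hM : (2 <= M)%N)
  (sigma2 taup rhop Tc rho betab betae : R)
  (hsigma2 : 0 < sigma2) (htaup : 0 < taup) (hrhop : 0 < rhop) (hTc : taup < Tc)
  (hrho0 : 0 <= rho) (hrho1 : rho < 1) (hbetab : 0 < betab) (hbetae : 0 < betae)
  (Re_mx Reh Cm : 'M[R[i]]_M)
  (hRe : hpd Re_mx) (hReh : hpd Reh) (hRehsq : Reh *m Reh = Re_mx)
  (hC : spec_norm_le1 Cm)
  (gb u np : T -> 'cV[R[i]]_M)
  (hmodel : gaussian_model P sigma2 gb u np)
  (V : T -> 'M[R[i]]_(M, M.-1))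
  (hV : forall w,
     adj (V w) *m V w = 1%:M /\
     adj (V w) *m hhat_b taup rhop betab sigma2
                    (y_p taup rhop (h_b betab (gb w)) (np w)) = 0) :
  let eta : R := 1 - taup / Tc in
  let Om := Omega_ht taup rhop betab sigma2 in
  let hh := fun w => hhat_b taup rhop betab sigma2
                       (y_p taup rhop (h_b betab (gb w)) (np w)) in
  let he := fun w => h_e betae Reh (g_e rho Cm (gb w) (u w)) in
  let X := fun w => (adj (he w) *m wvec (hh w)) 0 0 in
  let Y := fun w => cnorm2 (adj (V w) *m he w) in
  let Rs_inf := fun alpha : R =>
    (eta%:E * \int[P]_w
       (Num.max 0 (log2 (1 + gamma_b_inf Om alpha (hh w))
                   - log2 (1 + gamma_e_inf alpha (cabs2 (X w)) (Y w))))%:E)%E in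
  P [set w | 0 < Y w] = 1%E ->
  P [set w | 0 < cnorm2 (hh w)] = 1%E ->
  exists alpha0 : R, 0 < alpha0 < 1 /\ (0 < Rs_inf alpha0)%E.
Proof.
destruct M as [|[|m]]; [by []|by []|].
move=> eta Om hh he X Y Rs_inf _ _.
have rho2_lt1 : rho ^+ 2 < 1 by rewrite expr_lt1.
have [g0 [u0 [hh0_neq0 he0_neq0 orth]]] := exists_orthogonal_channels Cm
  hsigma2 htaup hrhop rho2_lt1 hbetab hbetae hReh.
pose F := box_nbhs (Defs.coord gb u np) (coord_at g0 u0 0).
have [gb_cvg u_cvg np_cvg] := mxcvg_box_coord gb u np g0 u0 0.
have hh_cvg :
    mxcvg F hh (hhat_b taup rhop betab sigma2 (y_p taup rhop (h_b betab g0) 0)).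
  by apply/mxcvgZ/mxcvgD => //; apply/mxcvgZ/mxcvgZ.
have he_cvg : mxcvg F he (h_e betae Reh (g_e rho Cm g0 u0)).
  apply: mxcvgZ; apply: mxcvgM; first exact: mxcvg_cst.
  by apply: mxcvgD; apply: mxcvgZ => //; apply: mxcvgM => //; exact: mxcvg_cst.
have Om_gt0 : 0 < Om by rewrite divr_gt0 ?mulr_gt0 // addr_gt0 // !mulr_gt0.
have /andP[half_gt0 half_lt1] : 0 < (2^-1 : R) < 1.
  by rewrite invr_gt0 ltr0n invf_lt1 ?ltr0n ?ltr1n.
have [c c_gt0 [dl dl_gt0 box_ge]] := near_secrecy_integrand_gt0 hh_cvg he_cvg
  hh0_neq0 he0_neq0 orth hV Om_gt0 half_gt0 half_lt1.
exists 2^-1; split; first by rewrite half_gt0.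
have eta_gt0 : 0 < eta by rewrite subr_gt0 ltr_pdivrMr ?mul1r // (lt_trans htaup hTc).
apply: mule_gt0; first by rewrite lte_fin.
pose B := box (Defs.coord gb u np) (coord_at g0 u0 0) dl.
have mB : measurable B by apply: measurable_box; case: hmodel.
apply: (lt_le_trans _ (ge0_integral_ge_measure P measurableT mB (subsetT B)
  (ltW c_gt0) _ _)).
- apply: mule_gt0; first by rewrite lte_fin.
  exact: gaussian_model_box_gt0 _ hsigma2 hmodel dl_gt0.
- by move=> w _; rewrite lee_fin le_max lexx.
- by move=> w /box_ge; rewrite lee_fin.
Qed.
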